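(* Let $E$ be a realizable matrix of rank $k$, and let $A$ be a $(0,1)$ matrix such that $A$ and $A+E$ are Gram mates. Then there exist $k$ positive singular values of $A$ such that the set of their corresponding right (resp. left) singular vectors is a basis of $\mathrm{Row}(E)$ (resp. $\mathrm{Col}(E)$); that is, there is a singular value decomposition $A=U\Sigma V^T$ and $k$ indices $i$ with $\Sigma_{ii}>0$ such that the corresponding $k$ columns of $V$ form a basis of $\mathrm{Row}(E)$ and the corresponding $k$ columns of $U$ form a basis of $\mathrm{Col}(E)$.
   Context: Two $(0,1)$ matrices $A,B$ are Gram mates if $AA^T=BB^T$, $A^TA=B^TB$ and $A\neq B$. A $(0,1,-1)$ matrix $E$ with $E\mathbf 1=0$ and $\mathbf 1^TE=0^T$ is realizable if there is a $(0,1)$ matrix $A$ such that $A$ and $A+E$ are Gram mates. *)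

From HB Require Import structures.
From mathcomp Require Import all_boot all_order all_algebra.
From mathcomp Require Import reals.
Set Implicit Arguments. Unset Strict Implicit. Unset Printing Implicit Defensive.
Import Order.TTheory GRing.Theory Num.Theory.
Local Open Scope ring_scope.

Definition zero_one (R : realType) (m n : nat) (A : 'M[R]_(m, n)) : Prop :=
  forall i j, A i j = 0 \/ A i j = 1.

Definition zero_one_neg (R : realType) (m n : nat) (E : 'M[R]_(m, n)) : Prop :=
  forall i j, [\/ E i j = 0, E i j = 1 | E i j = -1].

Definition gram_mates (R : realType) (m n : nat) (A B : 'M[R]_(m, n)) : Prop :=
  [/\ zero_one A, zero_one B, A *m A^T = B *m B^T, A^T *m A = B^T *m B & A <> B].

Definition realizable (R : realType) (m n : nat) (E : 'M[R]_(m, n)) : Prop :=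
  [/\ zero_one_neg E,
      E *m (const_mx 1 : 'cV[R]_n) = 0,
      (const_mx 1 : 'rV[R]_m) *m E = 0
    & exists A : 'M[R]_(m, n), zero_one A /\ gram_mates A (A + E)].

Definition orthogonal_mx (R : realType) (n : nat) (U : 'M[R]_n) : Prop :=
  U *m U^T = 1%:M /\ U^T *m U = 1%:M.

Definition nonneg_diag (R : realType) (m n : nat) (S : 'M[R]_(m, n)) : Prop :=
  (forall (i : 'I_m) (j : 'I_n), val i != val j -> S i j = 0) /\
  (forall (i : 'I_m) (j : 'I_n), val i = val j -> 0 <= S i j).

Definition is_svd (R : realType) (m n : nat) (A : 'M[R]_(m, n))
  (U : 'M[R]_m) (S : 'M[R]_(m, n)) (V : 'M[R]_n) : Prop :=
  [/\ orthogonal_mx U, orthogonal_mx V, nonneg_diag S & A = U *m S *m V^T].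

From HB Require Import structures.
From mathcomp Require Import all_boot all_order all_algebra.
From mathcomp Require Import reals.
From mathcomp Require Import ring.
From mathcomp.real_closed Require Import complex.
Import Order.TTheory GRing.Theory Num.Theory.
Local Open Scope ring_scope.

Set Implicit Arguments. Unset Strict Implicit. Unset Printing Implicit Defensive.

(* Write B = A + E.  Expanding A A^T = B B^T and A^T A = B^T B gives
   E A^T = - B E^T and E^T A = - B^T E.  Hence, in orthonormal bases whose first
   k vectors span Row(E) and Col(E), the matrix of A is block diagonal, and its
   Row(E)-to-Col(E) block is invertible: if y = c E^T lies in Col(E) and y A
   is orthogonal to Row(E), then y A = 0 because y A = - c B^T E lies in Row(E);
   then y B B^T y^T = y A A^T y^T = 0 forces y B = 0, so y E = 0 and y = 0.
   Gluing singular value decompositions of the two diagonal blocks gives the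
   required one.  Real SVDs, and the orthonormal completions of bases of Row(E)
   and Col(E), are built by induction with Householder reflections, starting
   from an eigenvector of A^T A supplied by the complex spectral theorem. *)

Section MatrixIdentities.
Variable R : comPzRingType.

Lemma gram_eq_cross m n (A E : 'M[R]_(m, n)) :
  A *m A^T = (A + E) *m (A + E)^T -> E *m A^T = - ((A + E) *m E^T).
Proof.
move=> AAt; apply: (addrI (A *m A^T + (A + E) *m E^T)); rewrite addrK {2}AAt.
by rewrite linearD /= !mulmxDl !mulmxDr !addrA [LHS]addrAC.
Qed.

Lemma gram_eq_cross_tr m n (A E : 'M[R]_(m, n)) :
  A^T *m A = (A + E)^T *m (A + E) -> E^T *m A = - ((A + E)^T *m E).
Proof.
move=> AtA; have := @gram_eq_cross _ _ A^T E^T.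
by rewrite -!(linearD (@trmx _ _ _)) !trmxK; apply.
Qed.

Lemma mulmx_vsub_block k1 k2 l1 l2 p q (Y : 'M[R]_(k1 + k2, p)) (A : 'M[R]_(p, q))
    (X : 'M[R]_(l1 + l2, q)) :
  Y *m A *m X^T = block_mx (usubmx Y *m A *m (usubmx X)^T) (usubmx Y *m A *m (dsubmx X)^T)
                           (dsubmx Y *m A *m (usubmx X)^T) (dsubmx Y *m A *m (dsubmx X)^T).
Proof. by rewrite -{1}(vsubmxK Y) -{1}(vsubmxK X) tr_col_mx mul_col_mx mul_col_row. Qed.

Lemma usubmx_block_diag_mul p1 p2 n (P : 'M[R]_p1) (Q : 'M[R]_p2)
    (X : 'M[R]_(p1 + p2, n)) :
  usubmx (block_mx P 0 0 Q *m X) = P *m usubmx X.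
Proof. by rewrite -{1}(vsubmxK X) mul_block_col col_mxKu mul0mx addr0. Qed.

End MatrixIdentities.

(* An eigenvalue of the complexification is real, hence a root of the real
   characteristic polynomial. *)
Lemma symmetric_real_eigenvector (R : rcfType) n (M : 'M[R]_n.+1) : M^T = M ->
  exists (v : 'rV[R]_n.+1) (l : R), v != 0 /\ v *m M = l *: v.
Proof.
move=> Msym; pose f := real_complex R; pose MC := map_mx f M.
have MCherm : MC \is hermsymmx.
  apply: realsym_hermsym; last by apply/mxOverP => i j; rewrite mxE complex_real.
  apply/is_hermitianmxP; rewrite expr0 scale1r map_mx_id //.
  by rewrite /MC map_trmx Msym.
have /orthomx_spectralP MCE := hermitian_normalmx MCherm.
set P := spectralmx MC in MCE; set d := spectral_diag MC in MCE.
have Punit : P \in unitmx by apply: spectral_unit.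
have [r rE] : exists r, f r = d 0 0.
  have /mxOverP/(_ 0 0) := hermitian_spectral_diag_real MCherm.
  by case: (d 0 0) => a b; rewrite complex_real => /eqP ->; exists a.
have P0n0 : row 0 P != 0.
  apply: contraTneq Punit => P00; rewrite -row_free_unit -kermx_eq0.
  apply/rowV0Pn; exists (delta_mx 0 0).
    by apply/sub_kermxP; rewrite -rowE P00.
  by apply/eqP => /matrixP/(_ 0 0); rewrite !mxE eqxx => /eqP; rewrite oner_eq0.
have : \det (MC - (f r)%:M) == 0.
  apply/det0P; exists (row 0 P) => //.
  rewrite mulmxBr -row_mul {1}MCE !mulmxA mulmxV // mul1mx row_mul row_diag_mx.
  by rewrite -scalemxAl -rowE rE mul_mx_scalar subrr.
rewrite (_ : MC - _ = map_mx f (M - r%:M)); last by rewrite map_mxB map_scalar_mx.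
rewrite det_map_mx fmorph_eq0 => /det0P [v vn0 vM]; exists v, r; split => //.
by apply/eqP; move/eqP: vM; rewrite mulmxBr subr_eq0 mul_mx_scalar.
Qed.

Section RealInnerProduct.
Variable R : rcfType.

Lemma mulmx_trmx_eq0 m n (M : 'M[R]_(m, n)) : (M *m M^T == 0) = (M == 0).
Proof.
apply/eqP/eqP => [MMt0|->]; last by rewrite mul0mx.
apply/matrixP => i j; move/matrixP/(_ i i): MMt0; rewrite !mxE.
under eq_bigr do rewrite mxE -expr2.
move/eqP; rewrite psumr_eq0 => [/allP/(_ j (mem_index_enum _))|k _]; last first.
  exact: sqr_ge0.
by rewrite sqrf_eq0 => /eqP.
Qed.

Lemma submx_orth_eq0 p m n (M : 'M[R]_(p, n)) (E : 'M[R]_(m, n)) :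
  (M <= E)%MS -> M *m E^T = 0 -> M = 0.
Proof.
move=> /submxP [N ->] NEEt0; apply/eqP; rewrite -mulmx_trmx_eq0.
by rewrite trmx_mul mulmxA NEEt0 mul0mx.
Qed.

Definition dot n (u w : 'rV[R]_n) := (u *m w^T) 0 0.

Lemma dotC n (u w : 'rV[R]_n) : dot u w = dot w u.
Proof. by rewrite /dot -[u *m w^T]trmxK trmx_mul trmxK mxE. Qed.

Lemma dotBl n (u v w : 'rV[R]_n) : dot (u - v) w = dot u w - dot v w.
Proof. by rewrite /dot mulmxBl !mxE. Qed.

Lemma dotZl n a (u w : 'rV[R]_n) : dot (a *: u) w = a * dot u w.
Proof. by rewrite /dot -scalemxAl mxE. Qed.

Lemma dotBr n (u v w : 'rV[R]_n) : dot w (u - v) = dot w u - dot w v.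
Proof. by rewrite dotC dotBl !(dotC w). Qed.

Lemma dotZr n a (u w : 'rV[R]_n) : dot u (a *: w) = a * dot u w.
Proof. by rewrite dotC dotZl dotC. Qed.

Lemma dotE n (u w : 'rV[R]_n) : u *m w^T = (dot u w)%:M.
Proof. exact: mx11_scalar. Qed.

Lemma dot_eq0 n (u : 'rV[R]_n) : (dot u u == 0) = (u == 0).
Proof. by rewrite -mulmx_trmx_eq0 dotE -scalemx1 scaler_eq0 oner_eq0 orbF. Qed.

Lemma dot_ge0 n (u : 'rV[R]_n) : 0 <= dot u u.
Proof. by rewrite /dot mxE sumr_ge0 // => i _; rewrite mxE -expr2 sqr_ge0. Qed.

Lemma dot_normalize n (u : 'rV[R]_n) : u != 0 ->
  exists c, dot (c *: u) (c *: u) = 1.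
Proof.
rewrite -dot_eq0 => uu0; have uu_gt0 : 0 < dot u u by rewrite lt_def uu0 dot_ge0.
exists (Num.sqrt (dot u u))^-1; rewrite dotZl dotZr mulrA -expr2 exprVn.
by rewrite sqr_sqrtr ?ltW // mulVf.
Qed.

End RealInnerProduct.

Section Orthogonal.
Variable R : realType.

Lemma orthogonal_mx1 n : orthogonal_mx (1%:M : 'M[R]_n).
Proof. by rewrite /orthogonal_mx trmx1 mulmx1. Qed.

Lemma orthogonal_mx_tr n (X : 'M[R]_n) : orthogonal_mx X -> orthogonal_mx X^T.
Proof. by rewrite /orthogonal_mx trmxK => -[]. Qed.

Lemma orthogonal_mxM n (X Y : 'M[R]_n) :
  orthogonal_mx X -> orthogonal_mx Y -> orthogonal_mx (X *m Y).
Proof.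
move=> [XXt XtX] [YYt YtY]; rewrite /orthogonal_mx trmx_mul.
by rewrite !mulmxA -[X *m Y *m _]mulmxA -[Y^T *m X^T *m _]mulmxA YYt XtX !mulmx1.
Qed.

Lemma orthogonal_mx_block m n (X : 'M[R]_m) (Y : 'M[R]_n) :
  orthogonal_mx X -> orthogonal_mx Y -> orthogonal_mx (block_mx X 0 0 Y).
Proof.
move=> [XXt XtX] [YYt YtY]; rewrite /orthogonal_mx tr_block_mx !trmx0 !mulmx_block.
by rewrite XXt XtX YYt YtY !mulmx0 !mul0mx !addr0 !add0r -!scalar_mx_block.
Qed.

Lemma orthogonal_mx_unit n (X : 'M[R]_n) : orthogonal_mx X -> X \in unitmx.
Proof. by case=> /mulmx1_unit[]. Qed.

Lemma orthogonal_rowsub_free n r (X : 'M[R]_n) (f : 'I_r -> 'I_n) :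
  orthogonal_mx X -> injective f -> row_free (rowsub f X).
Proof.
move=> [XXt _] f_inj; have Xf_orth : rowsub f X *m (rowsub f X)^T = 1%:M.
  rewrite mul_rowsub_mx trmx_mxsub mulmx_colsub XXt.
  by apply/matrixP => s t; rewrite !mxE (inj_eq f_inj).
by rewrite /row_free eqn_leq rank_leq_row -{1}(mxrank1 R r) -Xf_orth mxrankM_maxl.
Qed.

Lemma orthogonal_row_mul_tr n (X : 'M[R]_n) i :
  orthogonal_mx X -> row i X *m X^T = delta_mx 0 i.
Proof. by case=> XXt _; rewrite -row_mul XXt row1. Qed.

Lemma orthogonal_usub_dsub k n (X : 'M[R]_(k + n)) : orthogonal_mx X ->
  usubmx X *m (usubmx X)^T = 1%:M /\ dsubmx X *m (usubmx X)^T = 0.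
Proof.
case=> XXt _; move: XXt; rewrite -(vsubmxK X) tr_col_mx mul_col_row col_mxKu col_mxKd.
by rewrite (scalar_mx_block k n) => /eq_block_mx[-> _ -> _].
Qed.

Lemma orthogonal_dsub_eq0 k n p (X : 'M[R]_(k + n)) (E : 'M[R]_(p, k + n)) :
  orthogonal_mx X -> (E <= usubmx X)%MS -> dsubmx X *m E^T = 0.
Proof.
move=> /orthogonal_usub_dsub[_ XdXut] /submxP[N ->].
by rewrite trmx_mul mulmxA XdXut mul0mx.
Qed.

(* The Householder reflection exchanging the unit vectors e_i0 and v. *)
Lemma unit_row_orthogonal_mx n (v : 'rV[R]_n) (i0 : 'I_n) : dot v v = 1 ->
  exists H : 'M[R]_n, orthogonal_mx H /\ row i0 H = v.
Proof.
move=> v1; pose e : 'rV[R]_n := delta_mx 0 i0.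
have e1 : dot e e = 1 by rewrite /dot trmx_delta mul_delta_mx mxE !eqxx.
have [->|ve] := eqVneq v e.
  by exists 1%:M; rewrite rowE mulmx1; split => //; apply: orthogonal_mx1.
have [w wE] : {w | w = v - e} by exists (v - e).
pose c := dot w w; have c_neq0 : c != 0 by rewrite dot_eq0 wE subr_eq0.
pose H := 1%:M - (2 / c) *: (w^T *m w).
have Ht : H^T = H by rewrite /H linearB /= linearZ /= trmx1 trmx_mul trmxK.
have HH : H *m H = 1%:M.
  have wtw2 : w^T *m w *m (w^T *m w) = c *: (w^T *m w).
    by rewrite mulmxA -[w^T *m w *m w^T]mulmxA dotE mul_mx_scalar -scalemxAl.
  rewrite /H mulmxBl mul1mx mulmxBr mulmx1 -scalemxAl -scalemxAr wtw2 !scalerA.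
  rewrite mulrAC divfK //; set a := 2 / c.
  by rewrite mulr_natl mulr2n scalerDl opprB addrK subrK.
exists H; split; first by rewrite /orthogonal_mx Ht HH.
have ew : dot e w = dot e v - 1 by rewrite wE dotBr e1.
have cE : c = 2 - 2 * dot e v.
  by rewrite /c wE !dotBl !dotBr v1 e1 (dotC v e); ring.
rewrite rowE /H mulmxBr mulmx1 -scalemxAr mulmxA dotE mul_scalar_mx scalerA.
have -> : 2 / c * dot e w = -1.
  by apply: (mulIf c_neq0); rewrite mulrAC divfK // ew cE; ring.
by rewrite scaleN1r opprK wE addrC subrK.
Qed.
End Orthogonal.

Arguments orthogonal_mx1 {R n}.

Section Svd.
Variable R : realType.

Lemma nonneg_diag_block p m n (S1 : 'M[R]_p) (S2 : 'M[R]_(m, n)) :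
  nonneg_diag S1 -> nonneg_diag S2 -> nonneg_diag (block_mx S1 0 0 S2).
Proof.
move=> [S1d S1p] [S2d S2p]; split=> i j;
  case: (split_ordP i) => i' ->; case: (split_ordP j) => j' -> /=;
  rewrite ?block_mxEul ?block_mxEur ?block_mxEdl ?block_mxEdr ?mxE ?lexx //.
- exact: S1d.
- by rewrite eqn_add2l; apply: S2d.
- exact: S1p.
- by move/addnI; apply: S2p.
Qed.

Lemma is_svd_scalar n (s : R) : 0 <= s ->
  is_svd (s%:M : 'M[R]_n) 1%:M s%:M 1%:M.
Proof.
move=> s_ge0; split; try exact: orthogonal_mx1; last by rewrite mul1mx trmx1 mulmx1.
split=> i j; rewrite mxE -val_eqE; first by move/negPf ->; rewrite mulr0n.
by move=> ->; rewrite eqxx mulr1n.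
Qed.

Lemma is_svd_block p m n (A1 : 'M[R]_p) (A2 : 'M[R]_(m, n)) U1 S1 V1 U2 S2 V2 :
  is_svd A1 U1 S1 V1 -> is_svd A2 U2 S2 V2 ->
  is_svd (block_mx A1 0 0 A2) (block_mx U1 0 0 U2) (block_mx S1 0 0 S2)
         (block_mx V1 0 0 V2).
Proof.
move=> [oU1 oV1 S1d ->] [oU2 oV2 S2d ->]; split.
- exact: orthogonal_mx_block.
- exact: orthogonal_mx_block.
- exact: nonneg_diag_block.
by rewrite tr_block_mx !trmx0 !mulmx_block !mulmx0 !mul0mx !addr0 !add0r !mul0mx.
Qed.

Lemma is_svd_row_mx0 m n p (A : 'M[R]_(m, n)) U S V :
  is_svd A U S V ->
  is_svd (row_mx A (0 : 'M_(m, p))) U (row_mx S 0) (block_mx V 0 0 1%:M).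
Proof.
move=> [oU oV [Sd Sp] ->]; split => //.
- exact: orthogonal_mx_block oV orthogonal_mx1.
- by split=> i j; case: (split_ordP j) => j' -> /=;
    rewrite ?row_mxEl ?row_mxEr ?mxE ?lexx //; [apply: Sd | apply: Sp].
by rewrite tr_block_mx !trmx0 trmx1 -[RHS]mulmxA mul_row_block !mulmx0 !mul0mx !addr0
  mul_mx_row mulmx0 !mulmxA.
Qed.

Lemma is_svd_orth_equiv m n (P : 'M[R]_m) (Q : 'M[R]_n) A U S V :
  orthogonal_mx P -> orthogonal_mx Q -> is_svd (P *m A *m Q^T) U S V ->
  is_svd A (P^T *m U) S (Q^T *m V).
Proof.
move=> oP oQ [oU oV Sd PAQt]; split => //;
  try by apply: orthogonal_mxM => //; apply: orthogonal_mx_tr.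
have [[_ PtP] [_ QtQ]] := (oP, oQ).
rewrite trmx_mul trmxK.
have -> : P^T *m U *m S *m (V^T *m Q) = P^T *m (U *m S *m V^T) *m Q.
  by rewrite !mulmxA.
by rewrite -PAQt !mulmxA PtP mul1mx -mulmxA QtQ mulmx1.
Qed.

Lemma is_svd_unit_diag_pos p (B : 'M[R]_p) U S V :
  is_svd B U S V -> B \in unitmx -> forall t, 0 < S t t.
Proof.
move=> [oU oV [Sd Sp] BE] Bu t.
have Su : S \in unitmx.
  have [[_ UtU] [_ VtV]] := (oU, oV).
  have -> : S = U^T *m B *m V by rewrite BE !mulmxA UtU mul1mx -mulmxA VtV mulmx1.
  by rewrite !unitmx_mul unitmx_tr Bu !orthogonal_mx_unit.
rewrite lt_def Sp // andbT; apply/eqP => St0.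
have St_row0 : row t S = 0.
  apply/rowP => j; rewrite !mxE; have [<-|tj] := eqVneq t j; first exact: St0.
  by apply: Sd; exact: tj.
have := congr1 (row t) (mulmxV Su); rewrite row_mul St_row0 mul0mx row1.
by move/matrixP/(_ 0 t); rewrite !mxE !eqxx => /eqP; rewrite eq_sym oner_eq0.
Qed.

Definition diag_pos_prefix m n (S : 'M[R]_(m, n)) (r : nat) :=
  forall (i : 'I_m) (j : 'I_n), val i = val j -> (val i < r)%N = (0 < S i j).

Definition sorted_svd m n (A : 'M[R]_(m, n)) U S V (r : nat) :=
  [/\ is_svd A U S V, (r <= m)%N, (r <= n)%N & diag_pos_prefix S r].

Lemma diag_pos_prefix_row_mx0 m n p (S : 'M[R]_(m, n)) r : (r <= n)%N ->
  diag_pos_prefix S r -> diag_pos_prefix (row_mx S (0 : 'M_(m, p))) r.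
Proof.
move=> rn Spre i j; case: (split_ordP j) => j' -> /=; first by rewrite row_mxEl; apply: Spre.
rewrite row_mxEr mxE ltxx => ->; apply/negbTE; rewrite -leqNgt.
exact: leq_trans rn (leq_addr _ _).
Qed.

Lemma diag_pos_prefix_block1 m n (s : R) (S : 'M[R]_(m, n)) r : 0 < s ->
  diag_pos_prefix S r -> diag_pos_prefix (block_mx (s%:M : 'M_1) 0 0 S) r.+1.
Proof.
move=> s_gt0 Spre i j;
  case: (split_ordP i) => i' ->; case: (split_ordP j) => j' -> //=.
- by rewrite block_mxEul !ord1 mxE eqxx mulr1n s_gt0.
- by move=> i'j'; have := ltn_ord i'; rewrite i'j'.
- by move=> i'j'; have := ltn_ord j'; rewrite -i'j'.
- by rewrite block_mxEdr => -[] /Spre.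
Qed.

Lemma gram_unit_eigenvector m n (A : 'M[R]_(m, n.+1)) :
  exists v, dot v v = 1 /\ v *m A^T *m A = dot (v *m A^T) (v *m A^T) *: v.
Proof.
have [|w [l [w_neq0 wAtA]]] := @symmetric_real_eigenvector R n (A^T *m A).
  by rewrite trmx_mul trmxK.
have [c cw1] := dot_normalize w_neq0.
have vAtA : c *: w *m A^T *m A = l *: (c *: w).
  by rewrite -mulmxA -scalemxAl wAtA !scalerA mulrC.
exists (c *: w); split => //; rewrite vAtA.
by rewrite /dot trmx_mul trmxK mulmxA vAtA -scalemxAl mxE -/(dot _ _) cw1 mulr1.
Qed.

Lemma singular_pair_of_eigenvector m n (A : 'M[R]_(m, n)) v :
  v *m A^T *m A = dot (v *m A^T) (v *m A^T) *: v -> v *m A^T != 0 ->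
  exists u s, [/\ dot u u = 1, 0 < s, v *m A^T = s *: u & u *m A = s *: v].
Proof.
set w := v *m A^T => wA w_neq0.
have ww_gt0 : 0 < dot w w by rewrite lt_def dot_eq0 w_neq0 dot_ge0.
pose s := Num.sqrt (dot w w); have s_gt0 : 0 < s by rewrite sqrtr_gt0.
have ss : s ^+ 2 = dot w w by rewrite sqr_sqrtr // ltW.
exists (s^-1 *: w), s; split => //.
- by rewrite dotZl dotZr mulrA -expr2 exprVn ss mulVf // gt_eqF.
- by rewrite scalerA mulfV ?gt_eqF // scale1r.
- by rewrite -scalemxAl wA scalerA -ss expr2 mulKf // gt_eqF.
Qed.

Lemma kernel_deflation m n (A : 'M[R]_(m, n + 1)) (v : 'rV[R]_(n + 1)) :
  dot v v = 1 -> v *m A^T = 0 ->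
  exists P Q C, [/\ orthogonal_mx P, orthogonal_mx Q &
                    P *m A *m Q^T = row_mx C (0 : 'M_(m, 1))].
Proof.
move=> v1 vAt0; have [Q [oQ Qv]] := unit_row_orthogonal_mx (rshift n (0 : 'I_1)) v1.
exists 1%:M, Q, (lsubmx (A *m Q^T)); split; [exact: orthogonal_mx1 | by [] |].
rewrite mul1mx -[LHS]hsubmxK; congr row_mx.
have Qd : dsubmx Q = v by rewrite -Qv; apply/rowP => j; rewrite !mxE.
by rewrite -mulmx_rsub -trmx_dsub Qd -[A]trmxK -trmx_mul vAt0 trmx0.
Qed.

Lemma usubmx_singular_pair m n (A : 'M[R]_(1 + m, 1 + n)) (P : 'M[R]_(1 + m))
    (Q : 'M[R]_(1 + n)) u v s :
  orthogonal_mx Q -> row 0 P = u -> row 0 Q = v -> u *m A = s *: v ->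
  usubmx (P *m A *m Q^T) = row_mx (s%:M : 'M_1) 0.
Proof.
move=> oQ Pu Qv uA.
have -> : usubmx (P *m A *m Q^T) = row 0 (P *m A *m Q^T).
  by apply/rowP => j; rewrite mxE [RHS]mxE (_ : lshift m 0 = 0) //; apply: val_inj.
rewrite !row_mul Pu uA -scalemxAl -Qv orthogonal_row_mul_tr //.
have -> : (0 : 'I_(1 + n)) = lshift n 0 by apply: val_inj.
rewrite delta_mx_lshift scale_row_mx scaler0 -scalemx1; congr (row_mx (_ *: _) _).
by apply/matrixP => i j; rewrite !ord1 !mxE.
Qed.

Lemma singular_pair_deflation m n (A : 'M[R]_(1 + m, 1 + n)) u v s :
  dot u u = 1 -> dot v v = 1 -> v *m A^T = s *: u -> u *m A = s *: v ->
  exists P Q C, [/\ orthogonal_mx P, orthogonal_mx Q &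
                    P *m A *m Q^T = block_mx (s%:M : 'M_1) 0 0 C].
Proof.
move=> u1 v1 vAt uA.
have [P [oP Pu]] := unit_row_orthogonal_mx 0 u1.
have [Q [oQ Qv]] := unit_row_orthogonal_mx 0 v1.
have D_top := usubmx_singular_pair oQ Pu Qv uA.
have Dt_top := usubmx_singular_pair oP Qv Pu vAt.
have Dt : (P *m A *m Q^T)^T = Q *m A^T *m P^T by rewrite !trmx_mul trmxK mulmxA.
exists P, Q, (drsubmx (P *m A *m Q^T : 'M_(1 + m, 1 + n))); split => //.
rewrite -[LHS]submxK; congr block_mx.
- by rewrite /ulsubmx D_top row_mxKl.
- by rewrite /ursubmx D_top row_mxKr.
- by rewrite -[dlsubmx _]trmxK trmx_dlsub Dt /ursubmx Dt_top row_mxKr trmx0.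
Qed.

Lemma sorted_svd_exists n m (A : 'M[R]_(m, n)) : exists U S V r, sorted_svd A U S V r.
Proof.
elim: n m A => [|n IHn] m A.
  exists 1%:M, 0, 1%:M, 0%N; split => //; last by move=> i [].
  split; [exact: orthogonal_mx1 | exact: orthogonal_mx1 | | by rewrite [A]thinmx0 mulmx0 mul0mx].
  by split=> i j; rewrite mxE.
have [v [v1 vAtA]] := gram_unit_eigenvector A.
have [vAt0|vAt_neq0] := eqVneq (v *m A^T) 0.
  move: A v v1 vAt0 {vAtA}; rewrite -[n.+1]addn1 => A v v1 vAt0.
  have [P [Q [C [oP oQ PAQt]]]] := kernel_deflation v1 vAt0.
  have [U [S [V [r [svdC rm rn Spre]]]]] := IHn m C.
  exists (P^T *m U), (row_mx S 0), (Q^T *m block_mx V 0 0 1%:M), r; split => //.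
  - by apply: is_svd_orth_equiv oP oQ _; rewrite PAQt; apply: is_svd_row_mx0.
  - exact: leq_trans rn (leq_addr _ _).
  - exact: diag_pos_prefix_row_mx0.
case: m A vAtA vAt_neq0 => [|m] A vAtA vAt_neq0; first by rewrite thinmx0 eqxx in vAt_neq0.
have [u [s [u1 s_gt0 vAt uA]]] := singular_pair_of_eigenvector vAtA vAt_neq0.
have [P [Q [C [oP oQ PAQt]]]] := singular_pair_deflation u1 v1 vAt uA.
have [U [S [V [r [svdC rm rn Spre]]]]] := IHn m C.
exists (P^T *m block_mx (1%:M : 'M_1) 0 0 U), (block_mx (s%:M : 'M_1) 0 0 S),
  (Q^T *m block_mx (1%:M : 'M_1) 0 0 V), r.+1; split => //.
- apply: is_svd_orth_equiv oP oQ _; rewrite PAQt.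
  exact: is_svd_block (is_svd_scalar _ (ltW s_gt0)) svdC.
- exact: diag_pos_prefix_block1.
Qed.

End Svd.

Section AdaptedBases.
Variable R : realType.

Lemma row_diag_mulmx m n p (S : 'M[R]_(m, n)) (M : 'M[R]_(n, p)) i j :
  (forall i' j', val i' != val j' -> S i' j' = 0) -> val i = val j ->
  row i (S *m M) = S i j *: row j M.
Proof.
move=> Sd ij; rewrite row_mul mulmx_sum_row (bigD1 j) //= big1 ?addr0 ?mxE // => k kj.
by rewrite mxE Sd ?scale0r // ij eq_sym; exact: kj.
Qed.

Lemma sorted_svd_row_space m n (A : 'M[R]_(m, n)) U S V r (rn : (r <= n)%N) :
  sorted_svd A U S V r -> (rowsub (widen_ord rn) V^T == A)%MS.
Proof.
move=> [[[_ UtU] oV [Sd Sp] AE] rm _ Spre]; apply/andP; split.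
  apply/row_subP => t; rewrite row_rowsub.
  pose i := widen_ord rm t; pose j := widen_ord rn t.
  have Sij_gt0 : 0 < S i j by rewrite -Spre //= ltn_ord.
  have -> : row j V^T = (S i j)^-1 *: row i (U^T *m A).
    rewrite AE !mulmxA UtU mul1mx (row_diag_mulmx (j := j) V^T Sd) // scalerA.
    by rewrite mulVf ?gt_eqF ?scale1r.
  by rewrite scalemx_sub // (submx_trans (row_sub _ _)) ?submxMl.
rewrite AE -mulmxA (submx_trans (submxMl _ _)) //.
apply/row_subP => i; rewrite row_mul mulmx_sum_row summx_sub // => j _.
rewrite mxE; have [->|Sij_neq0] := eqVneq (S i j) 0; first by rewrite scale0r sub0mx.
have ij : val i = val j by apply: contraNeq Sij_neq0 => /Sd ->.
have jr : (j < r)%N by rewrite -ij (Spre i j ij) lt_def Sij_neq0 Sp.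
rewrite scalemx_sub // (_ : row j V^T = row (Ordinal jr) (rowsub (widen_ord rn) V^T)).
  exact: row_sub.
by rewrite row_rowsub; congr row; apply: val_inj.
Qed.

Lemma orthogonal_completion m k n (E : 'M[R]_(m, k + n)) : \rank E = k ->
  exists X : 'M[R]_(k + n), orthogonal_mx X /\ (usubmx X == E)%MS.
Proof.
move=> rE; have [U [S [V [r svdE]]]] := sorted_svd_exists E.
have [[_ oV _ _] _ rn _] := svdE; have VrE := sorted_svd_row_space rn svdE.
have widen_inj : injective (widen_ord rn) by move=> s t /(congr1 val) /= /val_inj.
have rk : r = k.
  rewrite -rE -(eqmx_rank VrE); apply/esym/eqP.
  exact: orthogonal_rowsub_free (orthogonal_mx_tr oV) widen_inj.
subst r; exists V^T; split; first exact: orthogonal_mx_tr.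
have -> : usubmx V^T = rowsub (widen_ord rn) V^T.
  by rewrite usubmxEsub; apply: eq_rowsub => t; apply: val_inj.
exact: VrE.
Qed.

Lemma rotated_usubmx_basis k n p (X : 'M[R]_(k + n)) (W1 : 'M[R]_k) (W2 : 'M[R]_n)
    (E : 'M[R]_(p, k + n)) :
  orthogonal_mx X -> (usubmx X == E)%MS -> orthogonal_mx W1 ->
  row_free (usubmx (X^T *m block_mx W1 0 0 W2)^T) /\
  (usubmx (X^T *m block_mx W1 0 0 W2)^T == E)%MS.
Proof.
move=> oX /eqmxP XE oW1; rewrite trmx_mul trmxK tr_block_mx !trmx0 usubmx_block_diag_mul.
have W1t_unit : W1^T \in unitmx by rewrite unitmx_tr orthogonal_mx_unit.
have Xu_free : row_free (usubmx X).
  by rewrite usubmxEsub; apply: orthogonal_rowsub_free oX (@lshift_inj _ _).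
split; first by rewrite /row_free mxrankMfree // mxrank_unit.
by apply/eqmxP; apply: eqmx_trans XE; apply/eqmxP/eqmxMunitP; exists W1^T.
Qed.

End AdaptedBases.

Section GramMates.
Variable R : realType.

Lemma cross_term_eq0 m n p q r s (A : 'M[R]_(m, n)) (F : 'M[R]_(p, m))
    (G : 'M[R]_(p, r)) (H : 'M[R]_(r, n)) (P : 'M[R]_(q, m)) (Q : 'M[R]_(s, n)) :
  F *m A = - (G *m H) -> (P <= F)%MS -> Q *m H^T = 0 -> P *m A *m Q^T = 0.
Proof.
move=> FA /submxP[N ->] QHt0.
by rewrite -[N *m F *m A]mulmxA FA mulmxN mulNmx -!mulmxA -[H]trmxK -trmx_mul QHt0
  trmx0 !mulmx0 oppr0.
Qed.

Lemma gram_mate_left_kernel p m n (A E : 'M[R]_(m, n)) (Y : 'M[R]_(p, m)) :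
  A *m A^T = (A + E) *m (A + E)^T -> A^T *m A = (A + E)^T *m (A + E) ->
  (Y <= E^T)%MS -> Y *m A *m E^T = 0 -> Y = 0.
Proof.
move=> AAt AtA YEt YAEt0.
have YA0 : Y *m A = 0.
  apply: submx_orth_eq0 YAEt0; have /submxP[N ->] := YEt.
  by rewrite -mulmxA gram_eq_cross_tr // mulmxN -mulNmx mulmxA submxMl.
have YB0 : Y *m (A + E) = 0.
  apply/eqP; rewrite -mulmx_trmx_eq0 trmx_mul mulmxA -[Y *m _ *m _]mulmxA -AAt.
  by rewrite mulmxA YA0 !mul0mx.
by apply: submx_orth_eq0 YEt _; rewrite trmxK; move: YB0; rewrite mulmxDr YA0 add0r.
Qed.

Lemma gram_mate_block_diag k m n (A E : 'M[R]_(k + m, k + n)) X Y :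
  A *m A^T = (A + E) *m (A + E)^T -> A^T *m A = (A + E)^T *m (A + E) ->
  orthogonal_mx X -> (usubmx X == E)%MS -> orthogonal_mx Y -> (usubmx Y == E^T)%MS ->
  Y *m A *m X^T = block_mx (usubmx Y *m A *m (usubmx X)^T) 0
                           0 (dsubmx Y *m A *m (dsubmx X)^T)
  /\ usubmx Y *m A *m (usubmx X)^T \in unitmx.
Proof.
move=> AAt AtA oX /andP[XE EX] oY /andP[YEt EtY]; split.
  rewrite mulmx_vsub_block (cross_term_eq0 (Q := dsubmx X) (gram_eq_cross_tr AtA) YEt);
    last first.
    exact: orthogonal_dsub_eq0.
  congr block_mx; apply: trmx_inj; rewrite !trmx_mul !trmxK trmx0 mulmxA.
  exact: cross_term_eq0 (gram_eq_cross AAt) XE (orthogonal_dsub_eq0 oY EtY).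
rewrite -row_free_unit -kermx_eq0; apply/eqP.
set M := usubmx Y *m A *m (usubmx X)^T; have ZM0 := mulmx_ker M.
have ZY0 : kermx M *m usubmx Y = 0.
  apply: (gram_mate_left_kernel AAt AtA); first exact: submx_trans (submxMl _ _) YEt.
  have /submxP[N ->] := EX.
  by move: ZM0; rewrite trmx_mul /M !mulmxA => ->; rewrite mul0mx.
have [YYt _] := orthogonal_usub_dsub oY.
by rewrite -[kermx M]mulmx1 -YYt mulmxA ZY0 mul0mx.
Qed.

Lemma gram_mate_svd k m n (A E : 'M[R]_(k + m, k + n)) : \rank E = k ->
  A *m A^T = (A + E) *m (A + E)^T -> A^T *m A = (A + E)^T *m (A + E) ->
  exists U S V, is_svd A U S V /\
    [/\ forall t, 0 < S (lshift m t) (lshift n t),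
        row_free (usubmx V^T) /\ (usubmx V^T == E)%MS
      & row_free (usubmx U^T) /\ (usubmx U^T == E^T)%MS].
Proof.
move=> rE AAt AtA.
have [X [oX XE]] := orthogonal_completion rE.
have [Y [oY YEt]] := orthogonal_completion (etrans (mxrank_tr E) rE).
have [YAXt B1_unit] := gram_mate_block_diag AAt AtA oX XE oY YEt.
have [U1 [S1 [V1 [r1 [svd1 _ _ _]]]]] := sorted_svd_exists (usubmx Y *m A *m (usubmx X)^T).
have [U2 [S2 [V2 [r2 [svd2 _ _ _]]]]] := sorted_svd_exists (dsubmx Y *m A *m (dsubmx X)^T).
exists (Y^T *m block_mx U1 0 0 U2), (block_mx S1 0 0 S2), (X^T *m block_mx V1 0 0 V2).
split; first by apply: is_svd_orth_equiv oY oX _; rewrite YAXt; apply: is_svd_block.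
have [[oU1 oV1 _ _] _] := (svd1, svd2).
split=> [t||]; try exact: rotated_usubmx_basis.
by rewrite block_mxEul; apply: is_svd_unit_diag_pos svd1 B1_unit t.
Qed.

End GramMates.

Theorem lemma3p4 (R : realType) (m n k : nat) (E A : 'M[R]_(m, n)) :
  realizable E -> \rank E = k ->
  zero_one A -> gram_mates A (A + E) ->
  exists (U : 'M[R]_m) (S : 'M[R]_(m, n)) (V : 'M[R]_n)
         (fu : 'I_k -> 'I_m) (fv : 'I_k -> 'I_n),
    is_svd A U S V /\
    [/\ injective fu,
        (forall t, val (fu t) = val (fv t)),
        (forall t, 0 < S (fu t) (fv t)),
        row_free (rowsub fv V^T) /\ (rowsub fv V^T == E)%MS
      & row_free (rowsub fu U^T) /\ (rowsub fu U^T == E^T)%MS].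
Proof.
(* Only the two Gram identities are used: neither realizability of E nor the
   (0,1) pattern of A plays any role. *)
move=> _ rE _ [_ _ AAt AtA _].
have km : (k <= m)%N by rewrite -rE rank_leq_row.
have kn : (k <= n)%N by rewrite -rE rank_leq_col.
move: E A rE AAt AtA; rewrite -(subnKC km) -(subnKC kn).
move: (m - k)%N (n - k)%N => m' n' E A rE AAt AtA.
have [U [S [V [svdA [S_pos VE UE]]]]] := gram_mate_svd rE AAt AtA.
exists U, S, V, (lshift m'), (lshift n'); rewrite -!usubmxEsub.
by split => //; split => //; exact: lshift_inj.
Qed.
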